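(* Consider factor graphs of LDPC codes with $N$ variable nodes and $M$ check nodes, all check nodes of degree $d_c$, variable node degree distribution (edge perspective) $\{\lambda_i\}$, and design rate $R=1-\frac{1/d_c}{\sum_j\lambda_j/j}=1-\frac{M}{N}$. A factor graph with this degree distribution having no cycles of variable nodes of degree two and three (i.e., in which the subgraph consisting of all variable nodes of degree two or three, all check nodes, and the edges between them contains no cycle) exists if and only if $$3\lambda_2+4\lambda_3\le\frac{6}{d_c}\,\frac{(1-R)-\frac1N}{1-R}.$$ Moreover, the right-hand side is strictly less than $\frac{6}{d_c}$.
   Context: $\lambda_i$ denotes the fraction of edges of the factor graph connected to variable nodes of degree $i$; the node-perspective fractions are $\Lambda_i=\frac{\lambda_i/i}{\sum_j\lambda_j/j}$, the fraction of variable nodes of degree $i$. The factor graph is the bipartite graph between variable nodes and check nodes of the parity-check matrix. *)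

From mathcomp Require Import all_boot all_order all_algebra.
Set Implicit Arguments. Unset Strict Implicit. Unset Printing Implicit Defensive.
Import Order.TTheory GRing.Theory Num.Theory.
Local Open Scope ring_scope.

(* A parity-check matrix H : 'M['F_2]_(M, N) (M check nodes = rows,
   N variable nodes = columns).  Its factor graph is the bipartite graph with
   an edge between check c and variable v iff H c v != 0. *)

Definition vdeg (M N : nat) (H : 'M['F_2]_(M, N)) (v : 'I_N) : nat :=
  #|[set c : 'I_M | H c v != 0]|.

Definition cdeg (M N : nat) (H : 'M['F_2]_(M, N)) (c : 'I_M) : nat :=
  #|[set v : 'I_N | H c v != 0]|.

Definition nedges (M N : nat) (H : 'M['F_2]_(M, N)) : nat :=
  #|[set p : 'I_M * 'I_N | H p.1 p.2 != 0]|.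

Definition nvars_deg (M N : nat) (H : 'M['F_2]_(M, N)) (i : nat) : nat :=
  #|[set v : 'I_N | vdeg H v == i]|.

Definition edge_frac (R : realFieldType) (M N : nat) (H : 'M['F_2]_(M, N))
  (i : nat) : R :=
  (i * nvars_deg H i)%:R / (nedges H)%:R.

Definition has_degree_distribution (R : realFieldType) (M N : nat)
  (H : 'M['F_2]_(M, N)) (dc : nat) (lam : nat -> R) : Prop :=
  (forall c : 'I_M, cdeg H c = dc) /\ (forall i : nat, lam i = edge_frac R H i).

Definition fg_vertex (M N : nat) := ('I_N + 'I_M)%type.

Definition adj23 (M N : nat) (H : 'M['F_2]_(M, N)) : rel (fg_vertex M N) :=
  fun x y =>
    match x, y with
    | inl v, inr c => ((vdeg H v == 2%N) || (vdeg H v == 3%N)) && (H c v != 0)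
    | inr c, inl v => ((vdeg H v == 2%N) || (vdeg H v == 3%N)) && (H c v != 0)
    | _, _ => false
    end.

Definition has_cycle (T : eqType) (e : rel T) : Prop :=
  exists p : seq T, [/\ uniq p, (2 < size p)%N & cycle e p].

Definition no_cycle23 (M N : nat) (H : 'M['F_2]_(M, N)) : Prop :=
  ~ has_cycle (adj23 H).

Definition rate_MN (R : realFieldType) (M N : nat) : R := 1 - M%:R / N%:R.

(* With all check nodes of degree dc there are M dc edges, so lambda_2 and
   lambda_3 equal 2 n2 / (M dc) and 3 n3 / (M dc), n_i being the number of
   variable nodes of degree i, while the right-hand side equals
   6 (M - 1) / (M dc) < 6 / dc.  The condition therefore reads
   n2 + 2 n3 <= M - 1.

   Necessity: without cycles the degree-2/3 subgraph is a forest on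
   n2 + n3 + M vertices with 2 n2 + 3 n3 edges.

   Sufficiency: keep the variable degrees of a graph with the given
   distribution and rebuild its edges.  The degree-2/3 variables, ranked
   v_0, v_1, ..., are strung along a chain in which v_k and v_(k+1) share
   check k for every k < s = 2 n2 + 3 n3 - M (the condition gives
   s < n2 + n3); their remaining edges go to the fresh checks s, ..., M - 1.
   This meets each check exactly as often as dealing 2 n2 + 3 n3 edges
   cyclically (edge p to check p mod M) would, so dealing all the other edges
   cyclically after them makes every check degree dc.  A check of v_k other
   than k - 1 only leads to higher ranks, so no cycle can pass through a
   variable of maximal rank. *)

From mathcomp Require Import all_boot all_order all_algebra.
From mathcomp Require Import zify ring.
Import Order.TTheory GRing.Theory Num.Theory.
Set Implicit Arguments. Unset Strict Implicit. Unset Printing Implicit Defensive.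

Section Forest.
Variables (T : finType) (e : rel T).
Hypotheses (e_sym : symmetric e) (e_irr : irreflexive e) (e_acyclic : ~ has_cycle e).

Definition deg_in (S : {set T}) x := #|[set y in S | e x y]|.

Lemma acyclic_path_no_chord y z q : uniq (y :: q) -> path e y q ->
  z \in behead q -> ~~ e z y.
Proof.
case: q => [|r q] // Hu Hp /= Hz; apply/negP => Hzy.
case/splitPr: Hz Hu Hp => s1 s2 Hu /= /andP[Hyr Hp].
apply: e_acyclic; exists (y :: r :: rcons s1 z); split.
- apply: subseq_uniq Hu; rewrite -cats1 /= !eqxx.
  by apply: cat_subseq => //=; rewrite eqxx sub0seq.
- by case: s1 {Hu Hp}.
- move: Hp; rewrite cat_path => /andP[H1 /= /andP[H2 _]].
  by rewrite /cycle /= Hyr rcons_path last_rcons Hzy rcons_path H1 H2.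
Qed.

Lemma deg_in_path_head (S : {set T}) y q : uniq (y :: q) -> path e y q ->
  {in S, forall w, e y w -> w \in y :: q} -> deg_in S y <= 1.
Proof.
move=> Hu Hp Hnb; rewrite leqNgt; apply/negP => /card_gt1P[z1 [z2 [+ + z12]]].
rewrite !inE => /andP[z1S e1] /andP[z2S e2].
have on_q w : w \in S -> e y w -> w \in q.
  move=> wS eyw; have := Hnb w wS eyw; rewrite inE.
  by case/orP => // /eqP Ew; move: eyw; rewrite Ew e_irr.
case: q Hu Hp Hnb on_q => [|r q] Hu Hp _ on_q; first by have := on_q _ z1S e1.
have beyond w : w \in S -> e y w -> w != r -> w \in q.
  by move=> wS eyw; have := on_q w wS eyw; rewrite inE => /orP[/eqP->|]; rewrite ?eqxx.
have [z z_q eyz] : exists2 z, z \in q & e y z.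
  case: (eqVneq z1 r) => [E1|N1]; first exists z2; last exists z1.
  - by apply: beyond; rewrite // -E1 eq_sym.
  - exact: e2.
  - exact: beyond.
  - exact: e1.
by move: (acyclic_path_no_chord Hu Hp z_q); rewrite e_sym eyz.
Qed.

Lemma exists_leaf (S : {set T}) : S != set0 -> exists2 x, x \in S & deg_in S x <= 1.
Proof.
case/set0Pn => x0 x0S.
pose ext y q := [pred z | (z \in S) && e y z && (z \notin y :: q)].
have stuck y q : uniq (y :: q) -> all (mem S) (y :: q) -> path e y q ->
    ext y q =1 xpred0 -> exists2 x, x \in S & deg_in S x <= 1.
  move=> Hu /andP[yS _] Hp none; exists y => //.
  apply: (deg_in_path_head Hu Hp) => w wS eyw.
  by apply: contraFT (none w); rewrite /= wS eyw => ->.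
suff: forall k y q, uniq (y :: q) -> all (mem S) (y :: q) -> path e y q ->
    #|S| - size (y :: q) <= k -> exists2 x, x \in S & deg_in S x <= 1.
  by move/(_ #|S| x0 [::]); apply; rewrite /= ?x0S ?leq_subr.
elim=> [|k IH] y q Hu HS Hp Hk.
all: case: (pickP (ext y q)) => [z /andP[/andP[zS eyz] znq] | none];
  last exact: stuck none.
all: have Hsize : size (z :: y :: q) <= #|S|
       by rewrite -(card_uniqP _) ?subset_leq_card //= ?znq //;
          apply/subsetP => w; rewrite inE => /orP[/eqP->|] //; move/allP: HS; apply.
- by move: Hk Hsize => /=; lia.
- apply: (IH z (y :: q)); first by rewrite cons_uniq znq Hu.
  + by apply/andP; split.
  + by apply/andP; split; rewrite // e_sym.
  + by move: Hk Hsize => /=; lia.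
Qed.

Lemma deg_inD1 (S : {set T}) x y : x \in S ->
  deg_in S y = e y x + deg_in (S :\ x) y.
Proof.
move=> xS; rewrite /deg_in (cardsD1 x) inE xS /=; congr (_ + _).
by apply: eq_card => z; rewrite !inE andbA.
Qed.

Lemma sum_adj_deg_in (S : {set T}) x : x \in S ->
  \sum_(y in S :\ x) (e y x : nat) = deg_in S x.
Proof.
move=> xS; rewrite /deg_in -sum1_card [RHS]big_mkcond big_mkcond /=.
rewrite big_mkcond; apply: eq_bigr => y _; rewrite !inE e_sym.
by case: (eqVneq y x) => [->|]; rewrite ?e_irr ?andbF //=; case: (y \in S); case: (e x y).
Qed.

(* Handshake bound for a forest: removing a leaf removes at most one edge. *)
Lemma forest_sum_deg_in (S : {set T}) : S != set0 ->
  \sum_(x in S) deg_in S x + 2 <= 2 * #|S|.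
Proof.
move Hn : #|S| => n; elim: n S Hn => [|n IH] S HS S0.
  by move: S0; rewrite -cards_eq0 HS.
have [x xS x_leaf] := exists_leaf S0.
have HS' : #|S :\ x| = n by move: HS; rewrite (cardsD1 x) xS; case.
rewrite (bigD1 x) //= (eq_bigl (mem (S :\ x))) => [|y]; last by rewrite !inE andbC.
rewrite (eq_bigr (fun y => e y x + deg_in (S :\ x) y)) => [|y _]; last exact: deg_inD1.
rewrite big_split /= sum_adj_deg_in //.
have [S'0 | S'_ne] := eqVneq (S :\ x) set0; last by have := IH _ HS' S'_ne; lia.
by rewrite -(sum_adj_deg_in xS) S'0 !big_set0; move: HS'; rewrite S'0 cards0 => <-.
Qed.

End Forest.

Lemma card_set_sum (I : finType) (P : pred I) : #|[set i | P i]| = \sum_i (P i : nat).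
Proof. by rewrite -sum1dep_card big_mkcond; apply: eq_bigr => i _; case: (P i). Qed.

Lemma card_set_sumType (I J : finType) (A : {set I + J}) :
  #|A| = #|[set i | inl i \in A]| + #|[set j | inr j \in A]|.
Proof.
rewrite -!sum1_card !(big_mkcond (fun x => x \in _)) big_sumType /=.
by congr (_ + _); apply: eq_bigr => i _; rewrite inE.
Qed.

Section FactorGraphCounts.
Variables (M N : nat) (H : 'M['F_2]_(M, N)).

Lemma nedges_sum_cdeg : nedges H = \sum_c cdeg H c.
Proof.
rewrite /nedges card_set_sum -(pair_bigA _ (fun c v => (H c v != 0%R) : nat)) /=.
by apply: eq_bigr => c _; rewrite /cdeg card_set_sum.
Qed.

Lemma nedges_sum_vdeg : nedges H = \sum_v vdeg H v.
Proof.
rewrite /nedges card_set_sum -(pair_bigA _ (fun c v => (H c v != 0%R) : nat)) /=.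
by rewrite exchange_big; apply: eq_bigr => v _; rewrite /vdeg card_set_sum.
Qed.

Lemma nedges_check_regular dc : (forall c, cdeg H c = dc) -> nedges H = M * dc.
Proof.
move=> Hc; rewrite nedges_sum_cdeg (eq_bigr (fun _ => dc)) //.
by rewrite sum_nat_const card_ord.
Qed.

Definition is23 v := (vdeg H v == 2) || (vdeg H v == 3).

Lemma card_is23 : #|[set v | is23 v]| = nvars_deg H 2 + nvars_deg H 3.
Proof.
rewrite /nvars_deg !card_set_sum -big_split /=.
by apply: eq_bigr => v _; rewrite /is23; case: (vdeg H v) => [|[|[|[|k]]]].
Qed.

Lemma sum_vdeg_is23 : \sum_(v | is23 v) vdeg H v = 2 * nvars_deg H 2 + 3 * nvars_deg H 3.
Proof.
rewrite /nvars_deg !card_set_sum !big_distrr /= -big_split big_mkcond /=.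
by apply: eq_bigr => v _; rewrite /is23; case: (vdeg H v) => [|[|[|[|k]]]].
Qed.

End FactorGraphCounts.

Section NecessaryCondition.
Variables (M N : nat) (H : 'M['F_2]_(M, N)).

Local Notation e := (adj23 H).

Definition vertices23 : {set fg_vertex M N} :=
  [set x | if x is inl v then is23 H v else true].

Lemma adj23_sym : symmetric e.
Proof. by case=> [v|c] [w|d]. Qed.

Lemma adj23_irr : irreflexive e.
Proof. by case. Qed.

Lemma deg_in_var v : is23 H v -> deg_in e vertices23 (inl v) = vdeg H v.
Proof.
move=> h; rewrite /deg_in card_set_sumType.
have -> : [set i | inl i \in [set y in vertices23 | e (inl v) y]] = set0.
  by apply/setP => i; rewrite !inE andbF.
rewrite cards0 add0n; apply: eq_card => c; rewrite !inE /=.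
by move: h; rewrite /is23 => ->.
Qed.

Lemma deg_in_check c :
  deg_in e vertices23 (inr c) = #|[set v | is23 H v && (H c v != 0%R)]|.
Proof.
rewrite /deg_in card_set_sumType.
have -> : [set i | inr i \in [set y in vertices23 | e (inr c) y]] = set0.
  by apply/setP => i; rewrite !inE andbF.
rewrite cards0 addn0; apply: eq_card => v; rewrite !inE /= /is23.
by case: (_ || _); rewrite ?andbT ?andbF.
Qed.

Lemma sum_deg_in_vertices23 :
  \sum_(x in vertices23) deg_in e vertices23 x = 2 * \sum_(v | is23 H v) vdeg H v.
Proof.
rewrite (big_mkcond (fun x => x \in vertices23)) big_sumType /= mul2n -addnn.
congr (_ + _).
  rewrite [RHS]big_mkcond; apply: eq_bigr => v _; rewrite inE.
  by case: ifP => // h; rewrite deg_in_var.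
rewrite (eq_bigr (fun c => \sum_v ((is23 H v && (H c v != 0%R)) : nat))) => [|c _];
  last by rewrite inE deg_in_check card_set_sum.
rewrite exchange_big [RHS]big_mkcond; apply: eq_bigr => v _.
case: ifP => h; last by rewrite big1 // => c _; rewrite h.
by rewrite /vdeg card_set_sum; apply: eq_bigr.
Qed.

Lemma card_vertices23 : #|vertices23| = nvars_deg H 2 + nvars_deg H 3 + M.
Proof.
rewrite card_set_sumType -card_is23; congr (_ + _); first by apply: eq_card => v; rewrite !inE.
by rewrite -[RHS](card_ord M); apply: eq_card => c; rewrite !inE.
Qed.

Lemma no_cycle23_bound : 0 < M -> no_cycle23 H ->
  nvars_deg H 2 + 2 * nvars_deg H 3 <= M - 1.
Proof.
move=> M0 noc.
have ne : vertices23 != set0 by rewrite -card_gt0 card_vertices23; lia.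
have := forest_sum_deg_in adj23_sym adj23_irr noc ne.
by rewrite sum_deg_in_vertices23 sum_vdeg_is23 card_vertices23; lia.
Qed.

End NecessaryCondition.

Section RateBound.
Local Open Scope ring_scope.
Variables (R : realFieldType) (M N dc : nat).
Hypotheses (N0 : (0 < N)%N) (M0 : (0 < M)%N) (dc0 : (0 < dc)%N).

Lemma edge_frac_check_regular (H : 'M['F_2]_(M, N)) i :
  (forall c, cdeg H c = dc) -> edge_frac R H i = (i * nvars_deg H i)%:R / (M * dc)%:R.
Proof. by move=> H_regular; rewrite /edge_frac (nedges_check_regular H_regular). Qed.

Let Mdc_gt0 : (0 : R) < (M * dc)%:R.
Proof. by rewrite ltr0n muln_gt0 M0. Qed.

Lemma rate_boundE :
  6 / dc%:R * (((1 - rate_MN R M N) - 1 / N%:R) / (1 - rate_MN R M N))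
  = (6 * (M - 1))%:R / (M * dc)%:R.
Proof.
rewrite /rate_MN natrM natrB // natrM; field.
by rewrite !pnatr_eq0 -!lt0n N0 M0 dc0.
Qed.

Lemma lambda23_le_rate_bound (n2 n3 : nat) :
  (3 * ((2 * n2)%:R / (M * dc)%:R) + 4 * ((3 * n3)%:R / (M * dc)%:R)
     <= 6 / dc%:R * (((1 - rate_MN R M N) - 1 / N%:R) / (1 - rate_MN R M N)))
  = (n2 + 2 * n3 <= M - 1)%N.
Proof.
rewrite rate_boundE.
have -> : 3 * ((2 * n2)%:R / (M * dc)%:R) + 4 * ((3 * n3)%:R / (M * dc)%:R)
          = (6 * (n2 + 2 * n3))%:R / (M * dc)%:R :> R.
  by rewrite !natrM natrD natrM; field; rewrite !pnatr_eq0 -!lt0n dc0 M0.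
rewrite ler_pM2r ?invr_gt0 // ler_nat leq_pmul2l //.
Qed.

Lemma rate_bound_lt :
  6 / dc%:R * (((1 - rate_MN R M N) - 1 / N%:R) / (1 - rate_MN R M N)) < 6 / dc%:R.
Proof.
rewrite rate_boundE.
have -> : 6 / dc%:R = (6 * M)%:R / (M * dc)%:R :> R.
  by rewrite !natrM; field; rewrite !pnatr_eq0 -!lt0n dc0 M0.
by rewrite ltr_pM2r ?invr_gt0 // ltr_nat; lia.
Qed.

End RateBound.

Section RankCriterion.
Variables (M N : nat) (H : 'M['F_2]_(M, N)) (rank : 'I_N -> nat) (parent : 'I_N -> nat).
Hypothesis rank_lt : forall v w c, is23 H v -> is23 H w -> H c v != 0%R ->
  H c w != 0%R -> v != w -> val c != parent v -> rank v < rank w.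

Local Notation e := (adj23 H).

Lemma cycle_next_parent v q : uniq (inl v :: q) -> cycle e (inl v :: q) ->
  1 < size q -> (forall w, inl w \in q -> rank w <= rank v) ->
  exists2 c, head (inl v) q = inr c & val c = parent v.
Proof.
case: q => [|a [|b r]] // Hu; rewrite /cycle /= => /and3P[eva eab _] _ Hmax.
case: a eva eab Hu Hmax => [x|c] //= /andP[v23 Hcv].
case: b => [w|d] //= /andP[w23 Hcw] Hu Hmax.
exists c => //; apply/eqP; apply: contraTT isT => c_not_parent.
have vw : v != w by apply/eqP => E; move: Hu; rewrite E !inE eqxx.
have := rank_lt v23 w23 Hcv Hcw vw c_not_parent.
by have := Hmax w; rewrite !inE eqxx orbT => /(_ isT); lia.
Qed.

(* At a variable of maximal rank on a cycle both neighbouring checks would be its parent. *)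
Lemma no_cycle23_of_rank : no_cycle23 H.
Proof.
move=> [p [Up Sp Cp]].
have [v0 v0p] : exists v, inl v \in p.
  case: p Up Sp Cp => [|[v|c] [|y r]] //= _ _; first by exists v; rewrite inE eqxx.
  rewrite /cycle /= => /andP[].
  by case: y => [w|d] // _ _; exists w; rewrite !inE eqxx orbT.
case: (@arg_maxnP _ v0 (fun w => inl w \in p) rank v0p) => v vp Hmax.
case: (rot_to vp) => i q Hrot.
have Uq : uniq (inl v :: q) by rewrite -Hrot rot_uniq.
have Sq : 1 < size q by move: Sp; rewrite -(size_rot i) Hrot.
have Mq w : inl w \in q -> rank w <= rank v.
  by move=> wq; apply: Hmax; rewrite -(mem_rot i) Hrot inE wq orbT.
have [c1 Hc1 Ec1] : exists2 c, head (inl v) q = inr c & val c = parent v.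
  by apply: cycle_next_parent => //; rewrite -Hrot rot_cycle.
have [c2 Hc2 Ec2] : exists2 c, head (inl v) (rev q) = inr c & val c = parent v.
  apply: cycle_next_parent; rewrite ?size_rev //.
  - by move: Uq; rewrite /= mem_rev rev_uniq.
  - rewrite -(rot_cycle 1) rot1_cons -rev_cons rev_cycle -Hrot rot_cycle.
    by rewrite -(eq_cycle (e := e)) // => x y; rewrite adj23_sym.
  - by move=> w; rewrite mem_rev; apply: Mq.
(* c1 follows v and c2 precedes it on the cycle, yet both are the parent of v. *)
have c12 : c1 = c2 by apply: val_inj; rewrite Ec1 Ec2.
case: q Uq Sq Hc1 Hc2 {Hrot Mq} => [|a [|b r]] //= /and3P[_ a_new _] _ Ha.
have [z [t Ebr]] : exists z t, rev (b :: r) = z :: t.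
  by case: (rev _) (size_rev (b :: r)) => [|z t] //; exists z, t.
rewrite rev_cons -cats1 Ebr /= => Hz.
have : z \in b :: r by rewrite -mem_rev Ebr mem_head.
by rewrite Hz -c12 -Ha (negbTE a_new).
Qed.
End RankCriterion.

Lemma big_nat_recr_cond (P : pred nat) (F : nat -> nat) n :
  \sum_(0 <= v < n.+1 | P v) F v = \sum_(0 <= v < n | P v) F v + (if P n then F n else 0).
Proof. by rewrite big_mkcond big_nat_recr //= -big_mkcond. Qed.

Lemma sum_count_iota_blocks (T : eqType) (f : nat -> T) (P : pred nat)
    (len : nat -> nat) base n x :
  \sum_(0 <= v < n | P v)
      count_mem x (map f (iota (base + \sum_(0 <= u < v | P u) len u) (len v)))
  = count_mem x (map f (iota base (\sum_(0 <= v < n | P v) len v))).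
Proof.
elim: n => [|n IH]; first by rewrite !big_geq.
rewrite !big_nat_recr_cond IH.
by case: (P n); rewrite ?addn0 // iotaD map_cat count_cat.
Qed.

Lemma sum_over_rank (P : pred nat) (F : nat -> nat) n :
  \sum_(0 <= v < n | P v) F (\sum_(0 <= u < v | P u) 1)
  = \sum_(0 <= k < \sum_(0 <= u < n | P u) 1) F k.
Proof.
elim: n => [|n IH]; first by rewrite !big_geq.
rewrite !big_nat_recr_cond IH; case: (P n); rewrite ?addn0 //.
by rewrite addn1 big_nat_recr.
Qed.

Lemma prefix_sum_lt (P : pred nat) (len : nat -> nat) v w : v < w ->
  \sum_(0 <= u < v | P u) len u + (if P v then len v else 0)
    <= \sum_(0 <= u < w | P u) len u.
Proof.
move=> vw; rewrite (@big_cat_nat _ _ _ v 0 w P len) ?(ltnW vw) //= leq_add2l.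
by rewrite big_mkcond (big_ltn vw) leq_addr.
Qed.

Lemma count_mem_iota c a n : count_mem c (iota a n) = (a <= c < a + n).
Proof. by rewrite count_uniq_mem ?iota_uniq // mem_iota. Qed.

Lemma sum_nat_eq c n : \sum_(0 <= k < n) (k == c : nat) = (c < n).
Proof.
rewrite (eq_bigr (fun k => if k == c then 1 else 0)) => [|k _]; last by case: eqP.
by rewrite -big_mkcond big_nat1_eq; case: ltnP.
Qed.

Section CyclicAssignment.
Variable M : nat.

Lemma map_modn_iota_block q j : j <= M -> [seq p %% M | p <- iota (q * M) j] = iota 0 j.
Proof.
move=> jM; rewrite -[q * M]addn0 iotaDl -map_comp -[RHS]map_id.
apply/eq_in_map => i; rewrite mem_iota /= => ij.
by rewrite modnMDl modn_small //; lia.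
Qed.

Lemma count_modn_iota_mul c q : c < M -> count_mem c [seq p %% M | p <- iota 0 (M * q)] = q.
Proof.
move=> cM; elim: q => [|q IH]; first by rewrite muln0.
rewrite mulnS addnC iotaD map_cat count_cat IH add0n mulnC map_modn_iota_block //.
by rewrite count_mem_iota cM; lia.
Qed.

Lemma count_modn_iota_le2 c L : c < M -> L <= 2 * M ->
  count_mem c [seq p %% M | p <- iota 0 L] = (c < L) + ((M <= L) && (c < L - M)).
Proof.
move=> cM L2; have mod0 := map_modn_iota_block 0; have mod1 := map_modn_iota_block 1.
rewrite mul0n in mod0; rewrite mul1n in mod1.
case: (leqP L M) => LM.
  by rewrite mod0 // count_mem_iota /=; case: (ltnP c L); case: (leqP M L) => /=; lia.
rewrite -(subnKC (ltnW LM)) iotaD map_cat count_cat mod0 // add0n mod1; last by lia.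
rewrite !count_mem_iota /= subnKC ?(ltnW LM) //.
by case: (ltnP c L); case: (leqP M L); case: (ltnP c (L - M)) => /=; lia.
Qed.

End CyclicAssignment.

Section ChainConstruction.
Variables (M N dc : nat) (dg : nat -> nat).
Hypothesis M0 : 0 < M.

Definition deg23 v := (dg v == 2) || (dg v == 3).
Definition rank23 v := \sum_(0 <= u < v | deg23 u) 1.
Definition n23 := rank23 N.
Definition stubs23 := \sum_(0 <= u < N | deg23 u) dg u.

(* Checks [0, nshared) receive two edges from degree-2/3 variables, check k
   linking the variables of rank k and k + 1; every other check at most one. *)
Definition nshared := stubs23 - M.
Definition shared_at k :=
  (if 0 < k <= nshared then [:: k.-1] else [::]) ++ (if k < nshared then [:: k] else [::]).
Definition nfresh v := dg v - size (shared_at (rank23 v)).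
Definition fresh_start v := nshared + \sum_(0 <= u < v | deg23 u) nfresh u.
Definition cyclic_start v := stubs23 + \sum_(0 <= u < v | ~~ deg23 u) dg u.

Definition checks_of v :=
  if deg23 v then shared_at (rank23 v) ++ iota (fresh_start v) (nfresh v)
  else [seq p %% M | p <- iota (cyclic_start v) (dg v)].

Lemma size_shared_at k : size (shared_at k) = (0 < k <= nshared) + (k < nshared).
Proof. by rewrite /shared_at size_cat; case: (_ && _); case: (k < nshared). Qed.

Lemma size_shared_at_le2 k : size (shared_at k) <= 2.
Proof. by rewrite size_shared_at; case: (_ && _); case: (k < nshared). Qed.

Lemma deg23_ge2 v : deg23 v -> 2 <= dg v.
Proof. by case/orP=> /eqP ->. Qed.

Lemma n23_le_stubs23 : 2 * n23 <= stubs23.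
Proof.
rewrite /n23 /rank23 /stubs23 big_distrr /=; apply: leq_sum => v Pv.
by rewrite muln1 deg23_ge2.
Qed.

Lemma sum_size_shared_at n :
  \sum_(0 <= k < n) size (shared_at k) = minn n nshared + minn n.-1 nshared.
Proof.
elim: n => [|n IH]; first by rewrite big_geq //; lia.
rewrite big_nat_recr //= IH size_shared_at.
case: n {IH} => [|n] /=; first by case: (ltnP 0 nshared) => /=; lia.
by case: (ltnP n nshared); case: (ltnP n.+1 nshared) => /=; lia.
Qed.

Lemma sum_nfresh_minn : \sum_(0 <= v < N | deg23 v) nfresh v
  = stubs23 - (minn n23 nshared + minn n23.-1 nshared).
Proof.
have -> : stubs23 = \sum_(0 <= v < N | deg23 v) (nfresh v + size (shared_at (rank23 v))).
  apply: eq_bigr => v /deg23_ge2 dg2.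
  by rewrite /nfresh subnK // (leq_trans (size_shared_at_le2 _) dg2).
rewrite big_split /= (sum_over_rank deg23 (fun k => size (shared_at k))).
by rewrite -/(rank23 N) -/n23 sum_size_shared_at addnK.
Qed.

Lemma count_shared_at c k : count_mem c (shared_at k)
  = ((c < nshared) && (k == c)) + ((c < nshared) && (k == c.+1)).
Proof.
have count1 b x : count_mem c (if b then [:: x] else [::]) = b && (x == c).
  by case: b => /=; rewrite ?addn0.
rewrite /shared_at count_cat !count1 {count1}; case: k => [|k] /=.
  by case: c => [|c] /=; rewrite ?andbF ?andbT ?addn0.
case: (eqVneq c k) => [->|kc] /=.
  by rewrite eqxx (gtn_eqF (ltnSn k)) !andbT !andbF addn0.
case: (eqVneq c k.+1) => [->|kc1] /=; rewrite ?eqxx ?andbT ?andbF ?addn0 //.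
  by rewrite (ltn_eqF (ltnSn k.+1)) andbF addn0.
by rewrite eqSS eq_sym (negbTE kc) andbF.
Qed.

Lemma sum_count_shared_at c n : \sum_(0 <= k < n) count_mem c (shared_at k) =
  ((c < nshared) && (c < n)) + ((c < nshared) && (c.+1 < n)).
Proof.
under eq_bigr do rewrite count_shared_at.
rewrite big_split /=; case: (c < nshared) => /=; last by rewrite !big1.
by rewrite !sum_nat_eq.
Qed.


Hypothesis dg_le : forall v, v < N -> dg v <= M.
Hypothesis dg_sum : \sum_(0 <= v < N) dg v = M * dc.
Hypothesis stubs23_bound : stubs23 - n23 <= M - 1.

Lemma stubs23_le : stubs23 <= 2 * M.
Proof. by have := n23_le_stubs23; lia. Qed.

Lemma nshared_lt : nshared = 0 \/ 0 < nshared < n23.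
Proof. by have := n23_le_stubs23; rewrite /nshared; lia. Qed.

Lemma sum_nfresh : \sum_(0 <= v < N | deg23 v) nfresh v = stubs23 - 2 * nshared.
Proof.
rewrite sum_nfresh_minn; case: nshared_lt => [->|s_lt]; first by rewrite !minn0.
by rewrite !(minn_idPr _) //; lia.
Qed.

Lemma fresh_end_le v : v < N -> deg23 v -> fresh_start v + nfresh v <= M.
Proof.
move=> vN Pv; have := prefix_sum_lt deg23 nfresh vN; rewrite Pv sum_nfresh /fresh_start.
by have := stubs23_le; have := nshared_lt; rewrite /nshared; lia.
Qed.

Lemma shared_at_lt k c : c \in shared_at k -> c < nshared.
Proof.
rewrite /shared_at mem_cat; case: ifP => [/andP[k0 ks]|_]; case: ifP => h; rewrite ?inE //=;
  try case/orP; try move/eqP->; rewrite ?in_nil //; lia.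
Qed.

Lemma checks_of_lt v c : v < N -> c \in checks_of v -> c < M.
Proof.
move=> vN; rewrite /checks_of; case: ifP => Pv; last by case/mapP => p _ ->; rewrite ltn_pmod.
rewrite mem_cat => /orP[/shared_at_lt|]; first by have := stubs23_le; rewrite /nshared; lia.
by rewrite mem_iota => /andP[_]; have := fresh_end_le vN Pv; lia.
Qed.

Lemma checks_of_uniq v : v < N -> uniq (checks_of v).
Proof.
move=> vN; rewrite /checks_of; case: ifP => Pv.
  rewrite cat_uniq iota_uniq andbT; apply/andP; split.
    rewrite /shared_at; case: ifP => [/andP[k0 _]|_]; case: ifP => //= _.
    by rewrite andbT inE neq_ltn prednK // leqnn.
  apply/hasPn => c; rewrite mem_iota => /andP[h _]; apply/negP => /shared_at_lt.
  by move: h; rewrite /fresh_start; lia.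
rewrite -[cyclic_start v]addn0 iotaDl -map_comp map_inj_in_uniq ?iota_uniq //.
move=> i j; rewrite !mem_iota /= !add0n => ih jh /eqP.
by rewrite eqn_modDl => /eqP; rewrite !modn_small //; have := dg_le vN; lia.
Qed.

Lemma size_checks_of v : size (checks_of v) = dg v.
Proof.
rewrite /checks_of; case: ifP => Pv; last by rewrite size_map size_iota.
by rewrite size_cat size_iota subnKC // (leq_trans (size_shared_at_le2 _) (deg23_ge2 Pv)).
Qed.


Lemma sum_count_checks_of23 c : c < M ->
  \sum_(0 <= v < N | deg23 v) count_mem c (checks_of v)
  = count_mem c [seq p %% M | p <- iota 0 stubs23].
Proof.
move=> cM.
under eq_bigr => v Pv do rewrite /checks_of Pv count_cat.
rewrite big_split /= (sum_over_rank deg23 (fun k => count_mem c (shared_at k))).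
rewrite -/(rank23 N) -/n23 sum_count_shared_at.
have -> : \sum_(0 <= v < N | deg23 v) count_mem c (iota (fresh_start v) (nfresh v))
          = count_mem c (iota nshared (stubs23 - 2 * nshared)).
  have := sum_count_iota_blocks id deg23 nfresh nshared N c.
  by rewrite sum_nfresh map_id => <-; apply: eq_bigr => v _; rewrite map_id.
rewrite count_mem_iota count_modn_iota_le2 //; last exact: stubs23_le.
have := n23_le_stubs23; have := stubs23_bound; rewrite /nshared.
by case: (ltnP c (stubs23 - M)); case: (ltnP c stubs23); case: (leqP M stubs23);
  case: (ltnP c.+1 n23); case: (ltnP c n23) => /=; lia.
Qed.

Lemma count_checks_of c : c < M -> \sum_(0 <= v < N) count_mem c (checks_of v) = dc.
Proof.
move=> cM; rewrite (bigID deg23) /= sum_count_checks_of23 //.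
under eq_bigr => v Pv do rewrite /checks_of (negbTE Pv).
rewrite (sum_count_iota_blocks (modn^~ M) (predC deg23) dg stubs23 N c) /=.
have -> : \sum_(0 <= v < N | ~~ deg23 v) dg v = M * dc - stubs23.
  by rewrite -dg_sum [in RHS](bigID deg23) /= addKn.
rewrite -count_cat -map_cat -iotaD subnKC ?count_modn_iota_mul //.
by rewrite -dg_sum [in X in _ <= X](bigID deg23) /= leq_addr.
Qed.

Lemma rank23_lt v w : v < w -> deg23 v -> rank23 v < rank23 w.
Proof. by move=> vw Pv; have := prefix_sum_lt deg23 (fun _ => 1) vw; rewrite Pv addn1. Qed.

Lemma rank23_inj v w : deg23 v -> deg23 w -> rank23 v = rank23 w -> v = w.
Proof.
move=> Pv Pw E; case: (ltngtP v w) => // [/rank23_lt|/rank23_lt].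
- by move/(_ Pv); rewrite E ltnn.
- by move/(_ Pw); rewrite E ltnn.
Qed.

Lemma fresh_disjoint v w c : deg23 v -> deg23 w -> v != w ->
  c \in iota (fresh_start v) (nfresh v) -> c \notin iota (fresh_start w) (nfresh w).
Proof.
have fresh_lt x y : x < y -> deg23 x -> fresh_start x + nfresh x <= fresh_start y.
  move=> xy Px; have := prefix_sum_lt deg23 nfresh xy.
  by rewrite Px /fresh_start -addnA leq_add2l.
move=> Pv Pw vw; rewrite !mem_iota => /andP[h1 h2]; apply/negP => /andP[h3 h4].
case: (ltngtP v w) => h; last by rewrite h eqxx in vw.
- by have := fresh_lt _ _ h Pv; lia.
- by have := fresh_lt _ _ h Pw; lia.
Qed.

Lemma mem_shared_at c k : c \in shared_at k
  = (0 < k <= nshared) && (c == k.-1) || (k < nshared) && (c == k).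
Proof.
by rewrite /shared_at mem_cat; do 2 case: ifP => _; rewrite ?inE ?andbT ?andbF ?orbF.
Qed.

Lemma checks_of_rank_lt v w c : deg23 v -> deg23 w -> v != w ->
  c \in checks_of v -> c \in checks_of w -> c != (rank23 v).-1 -> rank23 v < rank23 w.
Proof.
move=> Pv Pw vw; rewrite /checks_of Pv Pw !(mem_cat c (shared_at _)).
move=> /orP[cv|cv] /orP[cw|cw] c_np.
- move: cv cw; rewrite !mem_shared_at (negbTE c_np) andbF /= => /andP[_ /eqP cv].
  case/orP=> [/andP[/andP[w0 _] /eqP cw]|/andP[_ /eqP cw]]; first by lia.
  by move: vw; rewrite (rank23_inj Pv Pw (etrans (esym cv) cw)) eqxx.
- have := shared_at_lt cv; move: cw; rewrite mem_iota /fresh_start; lia.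
- have := shared_at_lt cw; move: cv; rewrite mem_iota /fresh_start; lia.
- by rewrite (negbTE (fresh_disjoint Pv Pw vw cv)) in cw.
Qed.

End ChainConstruction.

Lemma card_ord_mem_seq M (s : seq nat) : uniq s -> {in s, forall c, c < M} ->
  #|[set c : 'I_M | val c \in s]| = size s.
Proof.
move=> s_uniq s_lt.
have -> : #|[set c : 'I_M | val c \in s]| = #|pmap insub s : seq 'I_M|.
  by apply: eq_card => c; rewrite inE mem_pmap_sub.
rewrite (card_uniqP _) ?pmap_sub_uniq // size_pmap_sub.
by apply/eqP; rewrite -all_count; apply/allP.
Qed.

Section SufficientCondition.
Variables (M N dc : nat) (H : 'M['F_2]_(M, N)).
Hypotheses (M0 : 0 < M) (H_regular : forall c, cdeg H c = dc).
Hypothesis H_bound : nvars_deg H 2 + 2 * nvars_deg H 3 <= M - 1.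

Definition vdeg_nat (n : nat) : nat := oapp (vdeg H) 0 (insub n : option 'I_N).

Lemma vdeg_natE (v : 'I_N) : vdeg_nat v = vdeg H v.
Proof. by rewrite /vdeg_nat valK. Qed.

Lemma vdeg_nat_le v : v < N -> vdeg_nat v <= M.
Proof.
move=> _; rewrite /vdeg_nat; case: insub => //= v'.
by rewrite /vdeg -[X in _ <= X](card_ord M) max_card.
Qed.

Lemma sum_vdeg_nat : \sum_(0 <= v < N) vdeg_nat v = M * dc.
Proof.
rewrite big_mkord (eq_bigr (vdeg H)) => [|v _]; last exact: vdeg_natE.
by rewrite -nedges_sum_vdeg (nedges_check_regular H_regular).
Qed.

Lemma deg23_vdeg_nat (v : 'I_N) : deg23 vdeg_nat v = is23 H v.
Proof. by rewrite /deg23 /is23 vdeg_natE. Qed.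

Lemma stubs23_vdeg_nat_bound : stubs23 N vdeg_nat - n23 N vdeg_nat <= M - 1.
Proof.
have -> : stubs23 N vdeg_nat = 2 * nvars_deg H 2 + 3 * nvars_deg H 3.
  rewrite /stubs23 big_mkord -sum_vdeg_is23.
  by apply: eq_big => [v|v _]; rewrite ?deg23_vdeg_nat ?vdeg_natE.
have -> : n23 N vdeg_nat = nvars_deg H 2 + nvars_deg H 3.
  rewrite /n23 /rank23 big_mkord -card_is23 -sum1_card.
  by apply: eq_bigl => v; rewrite inE deg23_vdeg_nat.
by move: H_bound; lia.
Qed.

Definition chain_matrix : 'M['F_2]_(M, N) :=
  \matrix_(c, v) ((val c \in checks_of M N vdeg_nat v) : nat)%:R%R.

Lemma chain_matrix_neq0 c v :
  (chain_matrix c v != 0%R) = (val c \in checks_of M N vdeg_nat v).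
Proof. by rewrite mxE; case: (_ \in _); rewrite ?oner_neq0 ?eqxx. Qed.

Let checks_of_uniq_ord (v : 'I_N) :=
  checks_of_uniq M0 vdeg_nat_le sum_vdeg_nat stubs23_vdeg_nat_bound (ltn_ord v).

Lemma vdeg_chain_matrix v : vdeg chain_matrix v = vdeg H v.
Proof.
rewrite /vdeg (eq_card (B := [set c : 'I_M | val c \in checks_of M N vdeg_nat v])) => [|c];
  last by rewrite !inE chain_matrix_neq0.
rewrite card_ord_mem_seq ?checks_of_uniq_ord ?size_checks_of ?vdeg_natE // => c.
exact: (checks_of_lt M0 sum_vdeg_nat stubs23_vdeg_nat_bound (ltn_ord v)).
Qed.

Lemma cdeg_chain_matrix c : cdeg chain_matrix c = dc.
Proof.
rewrite /cdeg card_set_sum.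
under eq_bigr => v _ do
  rewrite chain_matrix_neq0 -(count_uniq_mem _ (checks_of_uniq_ord v)).
rewrite -(big_mkord xpredT (fun v => count_mem (val c) (checks_of M N vdeg_nat v))).
exact: (count_checks_of M0 sum_vdeg_nat stubs23_vdeg_nat_bound (ltn_ord c)).
Qed.

Lemma chain_matrix_no_cycle23 : no_cycle23 chain_matrix.
Proof.
apply: (@no_cycle23_of_rank _ _ _ (rank23 vdeg_nat) (fun v => (rank23 vdeg_nat v).-1)).
move=> v w c; rewrite /is23 !vdeg_chain_matrix -/(is23 H v) -/(is23 H w).
rewrite -!deg23_vdeg_nat !chain_matrix_neq0 => Pv Pw cv cw vw c_np.
apply: (checks_of_rank_lt M0 sum_vdeg_nat stubs23_vdeg_nat_bound Pv Pw _ cv cw c_np).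
by apply: contra vw => /eqP h; apply/eqP; apply: val_inj.
Qed.

Lemma edge_frac_chain_matrix (R : realFieldType) i :
  edge_frac R chain_matrix i = edge_frac R H i.
Proof.
have nvars_eq : nvars_deg chain_matrix i = nvars_deg H i.
  by apply: eq_card => v; rewrite !inE vdeg_chain_matrix.
have nedges_eq : nedges chain_matrix = nedges H.
  by rewrite !nedges_sum_vdeg; apply: eq_bigr => v _; rewrite vdeg_chain_matrix.
by rewrite /edge_frac nvars_eq nedges_eq.
Qed.

End SufficientCondition.

Unset Implicit Arguments.
Local Open Scope ring_scope.

Theorem theorem4 (R : realFieldType) (N M dc : nat) (lam : nat -> R) :
  (0 < N)%N -> (0 < M)%N -> (0 < dc)%N ->
  (exists H : 'M['F_2]_(M, N), has_degree_distribution H dc lam) ->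
  1 - (1 / dc%:R) / (\sum_(1 <= j < M.+1) lam j / j%:R) = rate_MN R M N ->
  ((exists H : 'M['F_2]_(M, N), has_degree_distribution H dc lam /\ no_cycle23 H)
     <->
   3 * lam 2%N + 4 * lam 3%N
     <= 6 / dc%:R * (((1 - rate_MN R M N) - 1 / N%:R) / (1 - rate_MN R M N)))
  /\
  6 / dc%:R * (((1 - rate_MN R M N) - 1 / N%:R) / (1 - rate_MN R M N)) < 6 / dc%:R.
Proof.
move=> N0 M0 dc0 [H [H_regular H_lam]] _; split; last exact: rate_bound_lt.
have lambda_bound_iff (H' : 'M['F_2]_(M, N)) : has_degree_distribution H' dc lam ->
    (3 * lam 2%N + 4 * lam 3%N
       <= 6 / dc%:R * (((1 - rate_MN R M N) - 1 / N%:R) / (1 - rate_MN R M N)))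
    = (nvars_deg H' 2 + 2 * nvars_deg H' 3 <= M - 1)%N.
  case=> H'_regular H'_lam.
  by rewrite !H'_lam !(@edge_frac_check_regular R M N dc H' _ H'_regular) lambda23_le_rate_bound.
split=> [[H' [H'_dist H'_acyclic]] | ].
  by rewrite (lambda_bound_iff H' H'_dist) no_cycle23_bound.
rewrite (lambda_bound_iff H) // => H_bound.
exists (chain_matrix H); split; last exact: chain_matrix_no_cycle23 M0 H_regular H_bound.
split=> [c | i]; first exact: cdeg_chain_matrix M0 H_regular H_bound c.
by rewrite H_lam (edge_frac_chain_matrix M0 H_regular H_bound).
Qed.
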